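(* Let $(E,\tau)$ be a violator space, $X\subseteq E$ and $x\in X$. Then $x$ is an extreme point of $X$ if and only if $x\in B$ for every $B\subseteq X$ with $\tau(B)=\tau(X)$.
   Context: $E$ is a finite set and $\tau:2^E\to 2^E$. $(E,\tau)$ is a violator space if (C1) $Y\subseteq\tau(Y)$ for all $Y\subseteq E$, and (C22) for all $F,G\subseteq E$, $F\subseteq G\subseteq\tau(F)$ implies $\tau(G)=\tau(F)$. An element $x\in X$ is an extreme point of $X$ if $x\notin\tau(X-\{x\})$. *)

From mathcomp Require Import all_boot.
Set Implicit Arguments. Unset Strict Implicit. Unset Printing Implicit Defensive.

Definition violator_space (E : finType) (tau : {set E} -> {set E}) : Prop :=
  (forall Y : {set E}, Y \subset tau Y) /\
  (forall F G : {set E}, F \subset G -> G \subset tau F -> tau G = tau F).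

Definition extreme_point (E : finType) (tau : {set E} -> {set E})
    (X : {set E}) (x : E) : Prop :=
  x \in X /\ x \notin tau (X :\ x).

From mathcomp Require Import all_boot.
Set Implicit Arguments. Unset Strict Implicit. Unset Printing Implicit Defensive.

(* By (C22), tau is constant between any set F and its closure tau F.  So x
   is extreme in X exactly when removing it changes tau X; and a set B \subset X
   with tau B = tau X that misses x would squeeze X :\ x between B and tau B,
   forcing tau (X :\ x) = tau X. *)

Section ViolatorSpace.

Variables (E : finType) (tau : {set E} -> {set E}).
Hypothesis sub_tau : forall Y : {set E}, Y \subset tau Y.
Hypothesis tau_locality :
  forall F G : {set E}, F \subset G -> G \subset tau F -> tau G = tau F.

Lemma tau_setD1_mem (X : {set E}) (x : E) :
  x \in tau (X :\ x) -> tau X = tau (X :\ x).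
Proof.
move=> x_tau; apply: tau_locality; first exact: subsetDl.
apply/subsetP => y yX; have [-> //|ne_yx] := eqVneq y x.
by apply: (subsetP (sub_tau _)); rewrite in_setD1 ne_yx.
Qed.

Lemma extreme_pointE (X : {set E}) (x : E) :
  x \in X -> extreme_point tau X x <-> tau (X :\ x) <> tau X.
Proof.
move=> xX; split=> [[_ x_tau] tau_eq|tau_neq]; last first.
  by split=> //; apply/negP => /tau_setD1_mem tau_eq; apply: tau_neq.
by move: x_tau; rewrite tau_eq (subsetP (sub_tau X)).
Qed.

Lemma tau_setD1_basis (X B : {set E}) (x : E) :
  B \subset X -> tau B = tau X -> x \notin B -> tau (X :\ x) = tau X.
Proof.
move=> BX tauB xB; rewrite -tauB; apply: tau_locality.
  by rewrite subsetD1 BX.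
by rewrite tauB (subset_trans (subsetDl X [set x])) ?sub_tau.
Qed.

End ViolatorSpace.

Theorem mainTheorem12 (E : finType) (tau : {set E} -> {set E})
    (X : {set E}) (x : E) :
  violator_space tau -> x \in X ->
  (extreme_point tau X x <->
   (forall B : {set E}, B \subset X -> tau B = tau X -> x \in B)).
Proof.
move=> [sub_tau tau_locality] xX.
have extremeE := extreme_pointE sub_tau tau_locality xX.
split.
- move=> /extremeE tau_neq B BX tauB; apply/negPn/negP => xB.
  exact/tau_neq/(tau_setD1_basis sub_tau tau_locality BX tauB xB).
- move=> in_bases; apply/extremeE => tau_eq.
  by move: (in_bases _ (subsetDl X [set x]) tau_eq); rewrite setD11.
Qed.
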